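(* Let $K_c=\operatorname{conv}\big(\mathbb{S}^{d-1}\cup\{\boldsymbol v_i\mid i\in I\}\big)\subset\mathbb{E}^d$ be a cap body and $i\in I$. Then the vertex $\boldsymbol v_i$ is illuminated by the direction $\boldsymbol u\in\mathbb{S}^{d-1}$ if and only if the closed spherical cap $C_i=\{\boldsymbol p\in\mathbb{S}^{d-1}\mid\langle\boldsymbol p,\boldsymbol v_i\rangle\ge 1\}$ is contained in the open hemisphere $\operatorname{Hem}_{-\boldsymbol u}$.
   Context: $\mathbb{S}^{d-1}$ is the unit sphere centred at the origin and $B^d$ the closed unit ball. A cap body is $\operatorname{conv}(\mathbb{S}^{d-1}\cup\{\boldsymbol v_i\mid i\in I\})$ where $\{\boldsymbol v_i\}$ is a countable subset of $\mathbb{E}^d\setminus B^d$ such that for distinct $i,j$ the segment $\overline{\boldsymbol v_i\boldsymbol v_j}$ intersects $B^d$; the $\boldsymbol v_i$ are its vertices. A direction $\boldsymbol u\in\mathbb{S}^{d-1}$ illuminates a boundary point $\boldsymbol p$ of $K_c$ if $\boldsymbol p+\lambda\boldsymbol u$ is in the interior of $K_c$ for some $\lambda>0$. For a unit vector $\boldsymbol w$, $\operatorname{Hem}_{\boldsymbol w}=\{\boldsymbol x\in\mathbb{S}^{d-1}\mid\langle\boldsymbol x,\boldsymbol w\rangle>0\}$. *)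

From HB Require Import structures.
From mathcomp Require Import all_boot all_order all_algebra.
From mathcomp Require Import classical_sets cardinality reals.
Set Implicit Arguments. Unset Strict Implicit. Unset Printing Implicit Defensive.
Import Order.TTheory GRing.Theory Num.Theory.
Local Open Scope ring_scope.
Local Open Scope classical_set_scope.

Section CapBody.
Variables (R : realType) (d : nat).
Notation vec := 'rV[R]_d.

Definition dotp (x y : vec) : R := \sum_(k < d) x 0 k * y 0 k.
Definition enorm (x : vec) : R := Num.sqrt (dotp x x).

Definition sphere : set vec := [set x | enorm x = 1].
Definition ball_unit : set vec := [set x | enorm x <= 1].

Definition conv (S : set vec) : set vec :=
  [set x | exists (n : nat) (p : 'I_n -> vec) (w : 'I_n -> R),
      (forall k, S (p k)) /\ (forall k, 0 <= w k) /\
      \sum_(k < n) w k = 1 /\ x = \sum_(k < n) w k *: p k].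

Definition interior_e (K : set vec) : set vec :=
  [set x | exists2 e : R, 0 < e & forall y, enorm (y - x) < e -> K y].
Definition closure_e (K : set vec) : set vec :=
  [set x | forall e : R, 0 < e -> exists2 y, K y & enorm (y - x) < e].
Definition boundary_e (K : set vec) : set vec :=
  [set x | closure_e K x /\ ~ interior_e K x].

Definition segment (a b : vec) : set vec :=
  [set x | exists2 t : R, 0 <= t <= 1 & x = (1 - t) *: a + t *: b].

Definition cap_vertices (V : set vec) : Prop :=
  countable V /\ (forall v, V v -> ~ ball_unit v) /\
  (forall v w, V v -> V w -> v <> w -> exists x, segment v w x /\ ball_unit x).

Definition cap_body (V : set vec) : set vec := conv (sphere `|` V).

Definition illuminates (K : set vec) (p u : vec) : Prop :=
  sphere u /\ boundary_e K p /\
  exists2 lam : R, 0 < lam & interior_e K (p + lam *: u).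

Definition Hem (w : vec) : set vec := [set x | sphere x /\ 0 < dotp x w].

Definition cap_of (v : vec) : set vec := [set p | sphere p /\ 1 <= dotp p v].

End CapBody.

(** The vertex [v] is separated from the cap body by supporting hyperplanes:
    whenever a half-space [<f, x> <= <f, v>] contains the unit ball, it contains
    the whole cap body, because every other vertex is joined to [v] by a segment
    through the ball.  The hyperplanes through [v] with unit normal [p] in the
    cap [C_v] are of this kind, so an interior point [v + lam u] forces
    [<p, u> < 0].  Conversely, if [<p, u> < 0] on the whole cap, then
    [s = -<v, u>] is positive and the projection [v + s u] of [v] onto [u^perp]
    lies in the open unit ball; so a neighbourhood of [v + (s/2) u] consists of
    midpoints of [v] and points of the ball, all of which are in the cap body. *)

From mathcomp Require Import all_boot all_order all_algebra.
From mathcomp Require Import classical_sets reals.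
From mathcomp Require Import ring lra.

Set Implicit Arguments.
Unset Strict Implicit.
Unset Printing Implicit Defensive.
Import Order.TTheory GRing.Theory Num.Theory.
Local Open Scope ring_scope.
Local Open Scope classical_set_scope.

Section Euclid.
Variables (R : realType) (d : nat).
Local Notation vec := 'rV[R]_d.
Implicit Types (u x y z f : vec) (e k : R).

Lemma dotpC x y : dotp x y = dotp y x.
Proof. by apply: eq_bigr => k _; rewrite mulrC. Qed.

Lemma dotpDr x y z : dotp x (y + z) = dotp x y + dotp x z.
Proof. by rewrite /dotp -big_split; apply: eq_bigr => k _; rewrite mxE mulrDr. Qed.

Lemma dotpZr x y a : dotp x (a *: y) = a * dotp x y.
Proof. by rewrite /dotp mulr_sumr; apply: eq_bigr => k _; rewrite mxE mulrCA. Qed.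

Lemma dotpNr x y : dotp x (- y) = - dotp x y.
Proof. by rewrite -scaleN1r dotpZr mulN1r. Qed.

Lemma dotp0r x : dotp x 0 = 0.
Proof. by rewrite -(scale0r 0) dotpZr mul0r. Qed.

Lemma dotpDl x y z : dotp (y + z) x = dotp y x + dotp z x.
Proof. by rewrite dotpC dotpDr !(dotpC x). Qed.

Lemma dotpZl x y a : dotp (a *: y) x = a * dotp y x.
Proof. by rewrite dotpC dotpZr (dotpC x). Qed.

Lemma dotpNl x y : dotp (- y) x = - dotp y x.
Proof. by rewrite dotpC dotpNr (dotpC x). Qed.

Definition dotpE := (dotpDl, dotpDr, dotpZl, dotpZr, dotpNl, dotpNr).

Lemma dotp_sumr x n (w : 'I_n -> R) (p : 'I_n -> vec) :
  dotp x (\sum_(k < n) w k *: p k) = \sum_(k < n) w k * dotp x (p k).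
Proof.
elim: n w p => [|n IH] w p; first by rewrite !big_ord0 dotp0r.
by rewrite !big_ord_recr /= dotpDr dotpZr IH.
Qed.

Lemma dotp_ge0 x : 0 <= dotp x x.
Proof. by apply: sumr_ge0 => k _; rewrite -expr2 sqr_ge0. Qed.

Lemma dotp_eq0 x : (dotp x x == 0) = (x == 0).
Proof.
apply/eqP/eqP => [x0|->]; last exact: dotp0r.
have sq0 := @psumr_eq0P _ _ predT _ (fun i _ => sqr_ge0 (x 0 i)).
by apply/rowP => i; rewrite mxE; apply/eqP; rewrite -sqrf_eq0 sq0.
Qed.

Lemma dotp_gt0 x : (0 < dotp x x) = (x != 0).
Proof. by rewrite lt0r dotp_eq0 dotp_ge0 andbT. Qed.

Lemma dotp_amgm x y e : 0 < e -> 2 * e * dotp x y <= e ^+ 2 * dotp x x + dotp y y.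
Proof.
move=> e0; have := dotp_ge0 (e *: x - y).
by rewrite !dotpE (dotpC y x) => h; nra.
Qed.

Lemma sphereP x : sphere x <-> dotp x x = 1.
Proof.
rewrite /sphere /enorm /=; split => [x1|->]; last exact: sqrtr1.
by rewrite -(sqr_sqrtr (dotp_ge0 x)) x1 expr1n.
Qed.

Lemma ball_unitP x : ball_unit x <-> dotp x x <= 1.
Proof. by rewrite /ball_unit /enorm /= -{1}sqrtr1 ler_sqrt. Qed.

Lemma enorm_lt x e : 0 < e -> (enorm x < e) = (dotp x x < e ^+ 2).
Proof.
by move=> e0; rewrite /enorm -(ltr_sqrt _ (exprn_gt0 2 e0)) sqrtr_sqr gtr0_norm.
Qed.

Lemma ball_sub_halfspace f k : 0 < k -> dotp f f <= k ^+ 2 ->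
  @ball_unit R d `<=` [set x | dotp f x <= k].
Proof.
move=> k0 fk x /ball_unitP x1 /=; have := dotp_amgm x f k0.
by rewrite (dotpC x) => h; rewrite -(ler_pM2l k0); nra.
Qed.

Lemma open_ball_unit x : dotp x x < 1 ->
  exists2 e, 0 < e & forall y, dotp y y < e ^+ 2 -> dotp (x + y) (x + y) <= 1.
Proof.
set eps := (1 - dotp x x) / 2 => x1.
have eps0 : 0 < eps by rewrite /eps; lra.
exists (eps / 2) => [|y y_small]; first lra.
have := dotp_amgm x y eps0; rewrite !dotpE (dotpC y x) => h.
have y0 := dotp_ge0 y; rewrite -(ler_pM2l eps0); rewrite /eps in h y_small *; nra.
Qed.

Lemma sphere_normalize x : x != 0 -> sphere ((Num.sqrt (dotp x x))^-1 *: x).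
Proof.
rewrite -dotp_gt0 => X0.
apply/sphereP; rewrite dotpZl dotpZr mulrA -expr2 exprVn sqr_sqrtr ?dotp_ge0 //.
by rewrite mulVf // gt_eqF.
Qed.

Lemma ball_scale_sphere u x : sphere u -> dotp x x <= 1 ->
  exists q t, [/\ sphere q, 0 <= t <= 1 & x = t *: q].
Proof.
move=> u1 x1; have [->|x0] := eqVneq x 0.
  by exists u, 0; rewrite scale0r lexx ler01.
exists ((Num.sqrt (dotp x x))^-1 *: x), (Num.sqrt (dotp x x)); split.
- exact: sphere_normalize.
- by rewrite sqrtr_ge0 /= -sqrtr1 ler_sqrt.
- by rewrite scalerA mulfV ?scale1r // gt_eqF // sqrtr_gt0 dotp_gt0.
Qed.

Lemma cap_sub_Hem_dotp_lt0 v u w : cap_of v `<=` Hem (- u) ->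
  1 <= dotp w w -> dotp w w <= dotp w v -> dotp w u < 0.
Proof.
move=> capH W1 Wv; have w0 : w != 0.
  by apply: contraTneq W1 => ->; rewrite dotp0r -ltNge ltr01.
set s := (Num.sqrt (dotp w w))^-1.
have s0 : 0 < s by rewrite invr_gt0 sqrtr_gt0 dotp_gt0.
have /sphereP sw1 := sphere_normalize w0; rewrite -/s dotpZl dotpZr mulrA in sw1.
have [_] : Hem (- u) (s *: w).
  apply: capH; split; first exact: sphere_normalize.
  by rewrite dotpZl; nra.
by rewrite dotpZl dotpNr; nra.
Qed.

End Euclid.

Section Hull.
Variables (R : realType) (d : nat).
Local Notation vec := 'rV[R]_d.

Lemma interior_e_shift (K : set vec) z f : interior_e K z ->
  exists2 del : R, 0 < del & K (z + del *: f).
Proof.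
move=> [e e0 zK]; set F := dotp f f.
have F0 : 0 <= F := dotp_ge0 f.
have F1 : 0 < F + 1 by lra.
exists (e / (F + 1)); first by rewrite divr_gt0.
apply: zK; rewrite (addrC z) addrK enorm_lt // dotpZl dotpZr -/F mulrA -expr2.
by rewrite expr_div_n mulrAC ltr_pdivrMr ?exprn_gt0 // ltr_pM2l ?exprn_gt0 //; nra.
Qed.

Lemma conv_sub (S : set vec) : S `<=` conv S.
Proof.
move=> x Sx; exists 1%N, (fun=> x), (fun=> 1).
by rewrite !big_ord1 scale1r.
Qed.

Lemma conv_sub_halfspace (S : set vec) f c :
  S `<=` [set x | dotp f x <= c] -> conv S `<=` [set x | dotp f x <= c].
Proof.
move=> Sc _ [n [p [w [Sp [w0 [w1 ->]]]]]] /=; rewrite dotp_sumr.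
apply: le_trans (_ : \sum_(k < n) w k * c <= c); last by rewrite -mulr_suml w1 mul1r.
by apply: ler_sum => k _; apply: ler_wpM2l (Sc _ (Sp k)).
Qed.

End Hull.

Section CapBody.
Variables (R : realType) (d : nat) (V : set 'rV[R]_d).
Hypothesis capV : cap_vertices V.
Local Notation vec := 'rV[R]_d.
Implicit Types (u v b f : vec).

Lemma vertex_dotp_gt1 v : V v -> 1 < dotp v v.
Proof.
move=> Vv; rewrite ltNge; apply/negP => /ball_unitP.
by case: capV => _ [outV _]; apply: outV.
Qed.

Lemma cap_body_sub_halfspace v f : V v ->
  @ball_unit R d `<=` [set x | dotp f x <= dotp f v] ->
  cap_body V `<=` [set x | dotp f x <= dotp f v].
Proof.
move=> Vv ball_f; apply: conv_sub_halfspace => y [/sphereP y1|Vy] /=.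
  by apply: ball_f; apply/ball_unitP; rewrite y1.
have [->//|yv] := eqVneq y v.
case: capV => _ [outV segV].
have [x [[t /andP[t0 t1] ->] xB]] := segV v y Vv Vy (nesym (elimN eqP yv)).
have t_gt0 : 0 < t.
  rewrite lt0r t0 andbT; apply: contra_notN (outV v Vv) => /eqP t_eq0.
  by move: xB; rewrite t_eq0 subr0 scale1r scale0r addr0.
by have := ball_f _ xB; rewrite /= dotpDr !dotpZr; nra.
Qed.

Lemma vertex_boundary v : V v -> boundary_e (cap_body V) v.
Proof.
move=> Vv; have D1 := vertex_dotp_gt1 Vv.
split=> [e e0|vK].
  by exists v; [apply: conv_sub; right | rewrite subrr /enorm dotp0r sqrtr0].
have ball_v : @ball_unit R d `<=` [set x | dotp v x <= dotp v v].
  by apply: ball_sub_halfspace; nra.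
have [del del0 vdK] := interior_e_shift v vK.
by have := cap_body_sub_halfspace Vv ball_v vdK; rewrite /= dotpDr dotpZr; nra.
Qed.

Lemma illuminates_cap_sub_Hem v u : V v ->
  illuminates (cap_body V) v u -> cap_of v `<=` Hem (- u).
Proof.
move=> Vv [_ [_ [lam lam0 vuK]]] p [p1 pv]; split => //.
have /sphereP P1 := p1.
have ball_p : @ball_unit R d `<=` [set x | dotp p x <= dotp p v].
  move=> x xB; apply: le_trans pv; apply: (ball_sub_halfspace ltr01) xB.
  by rewrite P1 expr1n.
have [del del0 K_del] := interior_e_shift p vuK.
have := cap_body_sub_halfspace Vv ball_p K_del.
by rewrite /= !dotpDr !dotpZr P1 dotpNr; nra.
Qed.

Lemma cap_body_midpoint_ball u v b : sphere u -> V v -> dotp b b <= 1 ->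
  cap_body V (2^-1 *: (v + b)).
Proof.
move=> u1 Vv b1; have [q [t [q1 /andP[t0 t1] ->]]] := ball_scale_sphere u1 b1.
exists 3%N, (fun k => [:: v; q; - q]`_k), (fun k => [:: 2^-1; (1 + t) / 4; (1 - t) / 4]`_k).
split.
  case=> [[|[|[|]]]] //= _; [by right | by left | left].
  by apply/sphereP; rewrite dotpNl dotpNr opprK; apply/sphereP.
split; first by case=> [[|[|[|]]]] //= _; lra.
rewrite !big_ord_recl !big_ord0 /=; split; first lra.
by apply/rowP => i; rewrite !mxE; field.
Qed.

Lemma cap_sub_Hem_illuminates u v : sphere u -> V v ->
  cap_of v `<=` Hem (- u) -> illuminates (cap_body V) v u.
Proof.
move=> u1 Vv capH; split=> //; split; first exact: vertex_boundary.
have /sphereP U1 := u1; have D1 := vertex_dotp_gt1 Vv.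
set c := dotp v u.
have c_lt0 : c < 0 by apply: (cap_sub_Hem_dotp_lt0 capH); lra.
have proj_lt1 : dotp (v - c *: u) (v - c *: u) < 1.
  rewrite ltNge; apply/negP => W1.
  have := cap_sub_Hem_dotp_lt0 capH W1.
  by rewrite !dotpE U1 (dotpC u v) -/c; lra.
have [e e0 ballB] := open_ball_unit proj_lt1.
exists (- c / 2); first lra.
exists (e / 2) => [|y]; first lra.
set r := y - _; rewrite enorm_lt; last lra.
move=> r_small; have -> : y = 2^-1 *: (v + (v - c *: u + 2 *: r)).
  by apply/rowP => i; rewrite !mxE; field.
apply: cap_body_midpoint_ball u1 Vv _; apply: ballB.
by rewrite dotpZl dotpZr; nra.
Qed.

End CapBody.

Theorem lemma4 (R : realType) (d : nat) (V : set 'rV[R]_d)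
  (hV : cap_vertices V) (v : 'rV[R]_d) (hv : V v) (u : 'rV[R]_d)
  (hu : sphere u) :
  illuminates (cap_body V) v u <-> cap_of v `<=` Hem (- u).
Proof.
split; [exact: illuminates_cap_sub_Hem | exact: cap_sub_Hem_illuminates].
Qed.
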